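(* Assume $\Phi$ is convex. Let $\emptyset\neq S\subseteq\mathbb{S}\cap\{x\in\mathbb{R}^n\mid\langle x,u\rangle\ge\alpha\}$ for some $u\in\mathbb{R}^n$ with $\|u\|=1$ and some $\alpha>0$. Then $S$ is hull-addible and $$\operatorname{cl}(\operatorname{sco}S)=\bigcap\{C\subseteq\mathbb{S}\mid C\text{ nonempty, closed and s-convex},\ S\subseteq C\}.$$ Consequently, $\operatorname{cl}(\operatorname{sco}S)$ is the smallest closed s-convex subset of $\mathbb{S}$ containing $S$.
   Context: Standing setting: $n\ge 2$; $\mathbb{R}^n$ carries the usual inner product $\langle\cdot,\cdot\rangle$ and Euclidean norm $\|\cdot\|$; $o$ denotes the zero vector. $\Phi:\mathbb{R}^n\to\mathbb{R}_+:=[0,\infty)$ is a continuous function with $\Phi(tx)=t\Phi(x)$ for all $x\in\mathbb{R}^n$, $t\ge 0$, and $\Phi(x)=0$ iff $x=o$. Set $\mathbb{S}:=\{x\in\mathbb{R}^n\mid \Phi(x)=1\}$ (with the topology induced from $\mathbb{R}^n$), and $\rho:\mathbb{R}^n\to\{o\}\cup\mathbb{S}$, $\rho(x):=x/\Phi(x)$ for $x\neq o$, $\rho(o):=o$. For $x,y\in\mathbb{S}$, $\lambda\in[0,1]$, $\lambda x+_s(1-\lambda)y:=\rho(\lambda x+(1-\lambda)y)$. A nonempty set $S\subseteq\mathbb{S}$ is called s-convex if $\lambda x+_s(1-\lambda)y\in S$ for all $x,y\in S$ and $\lambda\in[0,1]$. A nonempty set $S\subseteq\mathbb{S}$ is hull-addible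 if $o\notin\operatorname{conv}S$; for such $S$, $\operatorname{sco}S:=\rho(\operatorname{conv}S)$. $\operatorname{cl}$ denotes closure in $\mathbb{R}^n$. *)

(* MathComp-Analysis, R : realType, R^n as row vectors 'rV[R]_n
   (with its canonical product topology, which is the Euclidean topology). *)
From HB Require Import structures.
From mathcomp Require Import all_boot all_order all_algebra.
From mathcomp Require Import all_classical all_reals all_analysis.
Set Implicit Arguments. Unset Strict Implicit. Unset Printing Implicit Defensive.
Import Order.TTheory GRing.Theory Num.Theory.
Import numFieldNormedType.Exports.
Local Open Scope classical_set_scope.
Local Open Scope ring_scope.

Section Defs.
Context {R : realType} {n : nat}.
Implicit Types (Phi : 'rV[R]_n -> R) (S : set 'rV[R]_n).

Definition dotv (x y : 'rV[R]_n) : R := \sum_(i < n) x ord0 i * y ord0 i.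
Definition enorm (x : 'rV[R]_n) : R := Num.sqrt (dotv x x).

Definition gauge_like Phi : Prop :=
  [/\ continuous Phi,
      (forall x, 0 <= Phi x),
      (forall (t : R) x, 0 <= t -> Phi (t *: x) = t * Phi x) &
      (forall x, Phi x = 0 <-> x = 0)].

Definition convex_fun Phi : Prop :=
  forall (x y : 'rV[R]_n) (t : R), 0 <= t <= 1 ->
    Phi (t *: x + (1 - t) *: y) <= t * Phi x + (1 - t) * Phi y.

Definition sphere Phi : set 'rV[R]_n := [set x | Phi x = 1].

Definition rho Phi (x : 'rV[R]_n) : 'rV[R]_n :=
  if x == 0 then 0 else (Phi x)^-1 *: x.

Definition scomb Phi (l : R) (x y : 'rV[R]_n) : 'rV[R]_n :=
  rho Phi (l *: x + (1 - l) *: y).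

Definition s_convex Phi S : Prop :=
  [/\ S !=set0, S `<=` sphere Phi &
      forall x y (l : R), S x -> S y -> 0 <= l <= 1 -> S (scomb Phi l x y)].

Definition conv S : set 'rV[R]_n :=
  [set v | exists (k : nat) (lam : 'I_k -> R) (p : 'I_k -> 'rV[R]_n),
      [/\ forall i, S (p i), forall i, 0 <= lam i,
          \sum_(i < k) lam i = 1 & v = \sum_(i < k) lam i *: p i]].

Definition hull_addible Phi S : Prop :=
  [/\ S !=set0, S `<=` sphere Phi & ~ conv S 0].

Definition sco Phi S : set 'rV[R]_n := rho Phi @` conv S.

End Defs.

(* Since [H] is convex and avoids the origin, [conv S] lies in [H], so [S] is
   hull-addible.  Jensen's inequality gives [Phi <= 1] on [conv S], hence the
   radial projection [rho] only pushes hull points further into [H]: [sco S]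
   and its closure [K] stay in [H] (and on the sphere, by continuity).

   In the half-space setting, [sco S] is closed under s-combinations, which
   are continuous on [H]; hence [K] is s-convex, and the theorem follows:
   [K] is the smallest closed s-convex set containing [S], i.e. the
   intersection of all of them. *)

From HB Require Import structures.
From mathcomp Require Import all_boot all_order all_algebra.
From mathcomp Require Import all_classical all_reals all_analysis.
From mathcomp Require Import ring lra.
Import Order.TTheory GRing.Theory Num.Theory.
Import numFieldNormedType.Exports.
Local Open Scope classical_set_scope.
Local Open Scope ring_scope.
Set Implicit Arguments. Unset Strict Implicit.

Lemma closure_image_closed {T U : topologicalType} (f : T -> U)
    (A : set T) (D : set U) p :
  closed D -> {for p, continuous f} -> f @` A `<=` D -> closure A p -> D (f p).
Proof.
move=> cD fc fAD cAp; rewrite (closure_id D).1 //.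
move=> B /fc/cAp [a [Aa Ba]]; exists (f a); split => //; exact: fAD.
Qed.

Lemma closure_stable {T : topologicalType} (f : T -> T -> T) (A : set T) :
  (forall x y, A x -> A y -> A (f x y)) ->
  (forall x y, closure A x -> closure A y -> {for y, continuous (f x)}) ->
  (forall x y, closure A x -> closure A y -> {for x, continuous (f^~ y)}) ->
  forall x y, closure A x -> closure A y -> closure A (f x y).
Proof.
move=> fA fr fl.
have left_in_A a b : A a -> closure A b -> closure A (f a b).
  move=> Aa Ab; apply: (closure_image_closed (@closed_closure T A)
                          (fr _ _ (subset_closure Aa) Ab) _ Ab).
  by move=> _ [z Az <-]; apply/subset_closure/fA.
move=> x y Ax Ay; apply: (closure_image_closed (@closed_closure T A)
                            (fl _ _ Ax Ay) _ Ax).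
by move=> _ [z Az <-]; exact: left_in_A.
Qed.

Section InnerProduct.
Context {R : realType} {n : nat}.
Implicit Types (x y u : 'rV[R]_n).

Lemma dotv_sum k (lam : 'I_k -> R) (p : 'I_k -> 'rV[R]_n) u :
  dotv (\sum_(i < k) lam i *: p i) u = \sum_(i < k) lam i * dotv (p i) u.
Proof.
rewrite /dotv; under eq_bigr do rewrite summxE big_distrl /=.
rewrite exchange_big; apply: eq_bigr => i _; rewrite mulr_sumr.
by apply: eq_bigr => j _; rewrite mxE mulrA.
Qed.

Lemma dotv0 u : dotv 0 u = 0.
Proof. by rewrite /dotv big1 // => i _; rewrite mxE mul0r. Qed.

Lemma dotv_comb (a b : R) x y u :
  dotv (a *: x + b *: y) u = a * dotv x u + b * dotv y u.
Proof.
rewrite /dotv !mulr_sumr -big_split; apply: eq_bigr => i _; rewrite !mxE /=; ring.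
Qed.

Lemma dotv_continuous u : continuous (fun x => dotv x u).
Proof.
rewrite /dotv; apply: continuous_big => [|i _ x].
  exact: add_continuous.
exact: cvgM (@coord_continuous R 1 n ord0 i x) (cvg_cst _).
Qed.

End InnerProduct.

Lemma weight_in_unit {R : realFieldType} (a b : R) :
  0 <= a -> 0 <= b -> 0 < a + b -> 0 <= a / (a + b) <= 1.
Proof.
move=> a0 b0 ab0; rewrite divr_ge0 ?(ltW ab0) //=.
by rewrite ler_pdivrMr // mul1r lerDl.
Qed.

Section Gauge.
Context {R : realType} {n : nat} (Phi : 'rV[R]_n -> R).
Hypothesis gPhi : gauge_like Phi.
Implicit Types (x y : 'rV[R]_n).

Lemma Phi_ge0 x : 0 <= Phi x.
Proof. by case: gPhi. Qed.

Lemma PhiZ (t : R) x : 0 <= t -> Phi (t *: x) = t * Phi x.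
Proof. by case: gPhi => _ _ + _; apply. Qed.

Lemma Phi0 : Phi 0 = 0.
Proof. by case: gPhi => _ _ _ /(_ 0) [_ ->]. Qed.

Lemma Phi_gt0 x : x != 0 -> 0 < Phi x.
Proof.
move=> x0; rewrite lt_def Phi_ge0 andbT; apply/eqP => Px0.
case: gPhi => _ _ _ /(_ x) [Phi_eq0 _].
by move: x0; rewrite Phi_eq0 ?eqxx.
Qed.

Lemma Phi_continuous : continuous Phi.
Proof. by case: gPhi. Qed.

Lemma sphere_neq0 x : sphere Phi x -> x != 0.
Proof.
by rewrite /sphere /=; apply: contra_eqN => /eqP ->; rewrite Phi0 eq_sym oner_eq0.
Qed.

Lemma rhoE x : x != 0 -> rho Phi x = (Phi x)^-1 *: x.
Proof. by move=> x0; rewrite /rho (negbTE x0). Qed.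

Lemma rhoZ (c : R) x : 0 < c -> rho Phi (c *: x) = rho Phi x.
Proof.
move=> c0; have [->|x0] := eqVneq x 0; first by rewrite scaler0.
have cx0 : c *: x != 0 by rewrite scaler_eq0 negb_or x0 andbT gt_eqF.
rewrite !rhoE // PhiZ ?ltW // scalerA invfM mulrAC mulVf ?gt_eqF ?mul1r //.
Qed.

Lemma sphere_rho x : x != 0 -> sphere Phi (rho Phi x).
Proof.
move=> x0; rewrite /sphere /= rhoE // PhiZ ?invr_ge0 ?Phi_ge0 //.
by rewrite mulVf // gt_eqF // Phi_gt0.
Qed.

Lemma rho_sphere x : sphere Phi x -> rho Phi x = x.
Proof. by move=> Sx; rewrite rhoE ?sphere_neq0 // Sx invr1 scale1r. Qed.

Lemma Phi_rho_scale x : Phi x *: rho Phi x = x.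
Proof.
have [->|x0] := eqVneq x 0; first by rewrite /rho eqxx scaler0.
by rewrite rhoE // scalerA mulfV ?scale1r // gt_eqF // Phi_gt0.
Qed.

Lemma rho_cone_comb (a b : R) x y : 0 <= a -> 0 <= b -> 0 < a + b ->
  rho Phi (a *: x + b *: y) = scomb Phi (a / (a + b)) x y.
Proof.
move=> a0 b0 ab0; rewrite /scomb -[RHS](rhoZ _ ab0); congr (rho Phi _).
apply/rowP => i; rewrite !mxE; field; exact: lt0r_neq0.
Qed.

Lemma rho_continuous_at x : x != 0 -> {for x, continuous (rho Phi)}.
Proof.
move=> x0; have Px := Phi_gt0 x0.
have Phi_near_gt0 : \forall z \near x, 0 < Phi z.
  exact: (@cvgr_gt _ _ _ (nbhs_filter x) Phi _ (Phi_continuous (x:=x)) _ Px).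
have near_rhoE : {near x, (fun z => (Phi z)^-1 *: z) =1 rho Phi}.
  near=> z; rewrite /= rhoE //; apply: contraTneq isT => z0.
  have : 0 < Phi z by near: z.
  by rewrite z0 Phi0 ltxx.
apply: cvg_trans (near_eq_cvg near_rhoE) _; rewrite rhoE //.
apply: cvgZ; last exact: cvg_id.
exact: (@cvgV _ _ _ (nbhs_filter x) _ _ (lt0r_neq0 Px) (Phi_continuous (x:=x))).
Unshelve. all: by end_near.
Qed.

Lemma rho_affine_continuous_at (a : R) (b x : 'rV[R]_n) : a *: x + b != 0 ->
  {for x, continuous (fun z : 'rV[R]_n => rho Phi (a *: z + b))}.
Proof.
move=> axb0.
have -> : (fun z : 'rV[R]_n => rho Phi (a *: z + b)) =
          rho Phi \o (fun z : 'rV[R]_n => a *: z + b) by [].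
apply: continuous_comp; last exact: rho_continuous_at.
apply: (@continuousD _ _ _ (fun z : 'rV[R]_n => a *: z) (fun=> b)).
  exact: cvgZ (cvg_cst a) cvg_id.
exact: cst_continuous.
Qed.

Lemma sconvex_rho_cone (C : set 'rV[R]_n) : s_convex Phi C ->
  forall k (lam : 'I_k -> R) (p : 'I_k -> 'rV[R]_n),
  (forall i, C (p i)) -> (forall i, 0 <= lam i) -> 0 < \sum_(i < k) lam i ->
  C (rho Phi (\sum_(i < k) lam i *: p i)).
Proof.
case=> _ Csph Cscomb; elim=> [|k IH] lam p Cp lam0; first by rewrite big_ord0 ltxx.
rewrite !big_ord_recr /=.
set L := \sum_(i < k) _; set w := \sum_(i < k) _ => sum_gt0.
have L0 : 0 <= L by apply: sumr_ge0.
have [L_eq0|L_gt0] := eqVneq L 0.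
  have w0 : w = 0.
    rewrite /w big1 // => i _.
    by rewrite (psumr_eq0P (fun i _ => lam0 (widen_ord (leqnSn k) i)) L_eq0) ?scale0r.
  have lamk_gt0 : 0 < lam ord_max by rewrite L_eq0 add0r in sum_gt0.
  by rewrite w0 add0r rhoZ // rho_sphere; [exact: Cp | exact/Csph/Cp].
have Cw : C (rho Phi w).
  apply: IH => [i|i|]; [exact: Cp | exact: lam0 | by rewrite lt_def L_gt0 L0].
have w_neq0 : w != 0.
  by apply: contraTneq (sphere_neq0 (Csph _ Cw)) => ->; rewrite /rho eqxx negbK.
have Pw := Phi_gt0 w_neq0; have lamk := lam0 ord_max.
have tot_gt0 : 0 < Phi w + lam ord_max by rewrite ltr_pwDl.
rewrite -(Phi_rho_scale w) rho_cone_comb ?(ltW Pw) //.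
apply: Cscomb; [exact: Cw | exact: Cp | ].
exact: (weight_in_unit (ltW Pw) lamk tot_gt0).
Qed.

Lemma closure_sco_minimal (S C : set 'rV[R]_n) :
  closed C -> s_convex Phi C -> S `<=` C -> closure (sco Phi S) `<=` C.
Proof.
move=> Ccl Cconv SC; rewrite closureE; apply: smallest_sub => //.
move=> _ [_ [k [lam [p [Sp lam0 lam1 ->]]]] <-].
by apply: sconvex_rho_cone => // [i|]; [exact/SC/Sp | rewrite lam1 ltr01].
Qed.

End Gauge.

Section ConvexGauge.
Context {R : realType} {n : nat} (Phi : 'rV[R]_n -> R).
Hypotheses (gPhi : gauge_like Phi) (cPhi : convex_fun Phi).

Lemma Phi_subadditive (x y : 'rV[R]_n) : Phi (x + y) <= Phi x + Phi y.
Proof.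
have half : 0 <= (2^-1 : R) <= 1 by apply/andP; split; lra.
have -> : x + y = 2 *: (2^-1 *: x + (1 - 2^-1) *: y).
  by apply/rowP => i; rewrite !mxE; field.
rewrite PhiZ //; apply: le_trans (ler_wpM2l _ (cPhi x y half)) _ => //.
by rewrite le_eqVlt; apply/orP; left; apply/eqP; field.
Qed.

Lemma Phi_sum k (lam : 'I_k -> R) (p : 'I_k -> 'rV[R]_n) :
  (forall i, 0 <= lam i) ->
  Phi (\sum_(i < k) lam i *: p i) <= \sum_(i < k) lam i * Phi (p i).
Proof.
elim: k lam p => [|k IH] lam p lam0; first by rewrite !big_ord0 Phi0.
rewrite !big_ord_recr /=; apply: le_trans (Phi_subadditive _ _) _.
by rewrite PhiZ //; apply: lerD => //; exact: IH.
Qed.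

End ConvexGauge.

Section ConvexHull.
Context {R : realType} {n : nat} (S : set 'rV[R]_n).

Lemma sub_conv : S `<=` conv S.
Proof.
move=> x Sx; exists 1%N, (fun=> 1), (fun=> x).
by split => //; rewrite big_ord1 ?scale1r.
Qed.

(* The convex hull is closed under convex combinations: concatenate the two
   families of points, with weights scaled by [t] and [1 - t]. *)
Lemma conv_comb (v w : 'rV[R]_n) (t : R) : conv S v -> conv S w -> 0 <= t <= 1 ->
  conv S (t *: v + (1 - t) *: w).
Proof.
case=> k1 [l1 [p1 [Sp1 l10 l11 ->]]].
case=> k2 [l2 [p2 [Sp2 l20 l21 ->]]] /andP [t0 t1].
pose lam i := match fintype.split i with
              | inl j => t * l1 j | inr j => (1 - t) * l2 j end.
pose p i := match fintype.split i with inl j => p1 j | inr j => p2 j end.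
have lamL j : lam (lshift k2 j) = t * l1 j by rewrite /lam (unsplitK (inl j)).
have lamR j : lam (rshift k1 j) = (1 - t) * l2 j by rewrite /lam (unsplitK (inr j)).
have pL j : p (lshift k2 j) = p1 j by rewrite /p (unsplitK (inl j)).
have pR j : p (rshift k1 j) = p2 j by rewrite /p (unsplitK (inr j)).
exists (k1 + k2)%N, lam, p; split.
- by move=> i; rewrite /p; case: (fintype.split i).
- by move=> i; rewrite /lam; case: (fintype.split i) => j; apply: mulr_ge0;
    rewrite ?subr_ge0.
- rewrite big_split_ord (eq_bigr _ (fun j _ => lamL j)).
  rewrite (eq_bigr _ (fun j _ => lamR j)).
  by rewrite -!mulr_sumr l11 l21 !mulr1 /= addrC subrK.
- rewrite big_split_ord !scaler_sumr; congr (_ + _); apply: eq_bigr => i _.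
  + by rewrite lamL pL scalerA.
  + by rewrite lamR pR scalerA.
Qed.

End ConvexHull.

Section HalfSpace.
Context {R : realType} {n : nat} (Phi : 'rV[R]_n -> R).
Hypotheses (gPhi : gauge_like Phi) (cPhi : convex_fun Phi).
Variables (S : set 'rV[R]_n) (u : 'rV[R]_n) (alpha : R).
Hypothesis alpha_gt0 : 0 < alpha.
Hypothesis S_sub : S `<=` sphere Phi `&` [set x | alpha <= dotv x u].

Let halfspace := [set x : 'rV[R]_n | alpha <= dotv x u].

Lemma halfspace_neq0 x : halfspace x -> x != 0.
Proof. by apply: contraTneq => ->; rewrite /halfspace /= dotv0 -ltNge. Qed.

Lemma halfspace_comb x y (l : R) : halfspace x -> halfspace y -> 0 <= l <= 1 ->
  halfspace (l *: x + (1 - l) *: y).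
Proof. by rewrite /halfspace /= dotv_comb => hx hy /andP [l0 l1]; nra. Qed.

Lemma conv_halfspace : conv S `<=` halfspace.
Proof.
move=> _ [k [lam [p [Sp lam0 lam1 ->]]]]; rewrite /halfspace /= dotv_sum.
rewrite -[alpha]mul1r -lam1 mulr_suml; apply: ler_sum => i _.
by apply: ler_wpM2l => //; case: (S_sub (Sp i)).
Qed.

(* By Jensen's inequality the hull lies inside the unit ball of [Phi]. *)
Lemma conv_Phi_le1 v : conv S v -> Phi v <= 1.
Proof.
case=> k [lam [p [Sp lam0 lam1 ->]]].
apply: le_trans (Phi_sum gPhi cPhi p lam0) _.
rewrite -lam1 le_eqVlt; apply/orP; left; apply/eqP; apply: eq_bigr => i _.
by case: (S_sub (Sp i)) => -> _; rewrite mulr1.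
Qed.

Lemma halfspace_hull_addible : S !=set0 -> hull_addible Phi S.
Proof.
move=> S0; split => //; first by move=> x /S_sub [].
by move=> /conv_halfspace; rewrite /halfspace /= dotv0 leNgt alpha_gt0.
Qed.

Lemma sub_sco : S `<=` sco Phi S.
Proof.
move=> x Sx; exists x; first exact: sub_conv.
by apply: (rho_sphere gPhi); case: (S_sub Sx).
Qed.

Lemma sco_sphere : sco Phi S `<=` sphere Phi.
Proof.
by move=> _ [v cv <-]; apply: (sphere_rho gPhi); exact/halfspace_neq0/conv_halfspace.
Qed.

(* Projecting a hull point outwards onto the sphere only increases [<., u>]. *)
Lemma sco_halfspace : sco Phi S `<=` halfspace.
Proof.
move=> _ [v cv <-]; have hv := conv_halfspace cv; have v0 := halfspace_neq0 hv.
have Pv := Phi_gt0 gPhi v0; have Pv1 := conv_Phi_le1 cv.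
rewrite /halfspace /= rhoE // -[_ *: v]addr0 -[X in _ + X](scale0r v) dotv_comb.
rewrite mul0r addr0; apply: (le_trans hv); rewrite -[X in X <= _]mul1r.
by apply: ler_wpM2r; [exact: le_trans (ltW alpha_gt0) hv | rewrite invf_ge1].
Qed.

(* [sco S] is closed under s-combinations: an s-combination of [rho v] and
   [rho w] is the projection of a convex combination of [v] and [w]. *)
Lemma sco_scomb x y (l : R) : sco Phi S x -> sco Phi S y -> 0 <= l <= 1 ->
  sco Phi S (scomb Phi l x y).
Proof.
move=> [v cv <-] [w cw <-] /andP [l0 l1].
have v0 := halfspace_neq0 (conv_halfspace cv).
have w0 := halfspace_neq0 (conv_halfspace cw).
have iPv : 0 < (Phi v)^-1 by rewrite invr_gt0 Phi_gt0.
have iPw : 0 < (Phi w)^-1 by rewrite invr_gt0 Phi_gt0.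
set a := l * (Phi v)^-1; set b := (1 - l) * (Phi w)^-1.
have a0 : 0 <= a by rewrite mulr_ge0 // ltW.
have b0 : 0 <= b by rewrite mulr_ge0 ?subr_ge0 // ltW.
have ab0 : 0 < a + b.
  have [l_eq0|l_neq0] := eqVneq l 0.
    by rewrite /a /b l_eq0 mul0r add0r subr0 mul1r.
  have : 0 < a by rewrite mulr_gt0 // lt_def l_neq0.
  lra.
rewrite /scomb [rho _ v]rhoE // [rho _ w]rhoE // !scalerA -/a -/b.
rewrite (rho_cone_comb gPhi) //.
exists (a / (a + b) *: v + (1 - a / (a + b)) *: w) => //.
exact: conv_comb (weight_in_unit a0 b0 ab0).
Qed.

(* Both constraints are closed conditions, so they pass to the closure. *)
Lemma closure_sco_sphere : closure (sco Phi S) `<=` sphere Phi.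
Proof.
move=> x; apply: (closure_image_closed (@closed_eq _ 1) (Phi_continuous gPhi (x:=x))).
by move=> _ [y /sco_sphere Sy <-].
Qed.

Lemma closure_sco_halfspace : closure (sco Phi S) `<=` halfspace.
Proof.
move=> x; rewrite /halfspace /=.
apply: (closure_image_closed (@closed_ge _ alpha) (@dotv_continuous _ _ u x)).
by move=> _ [y /sco_halfspace hy <-].
Qed.

(* s-combinations are continuous in each variable on the half-space, so the
   closure of the s-convex set [sco S] is again s-convex. *)
Lemma closure_sco_sconvex : S !=set0 -> s_convex Phi (closure (sco Phi S)).
Proof.
move=> [s Ss]; split; [by exists s; exact/subset_closure/sub_sco |
  exact: closure_sco_sphere |].
move=> x y l Kx Ky l01; move: x y Kx Ky.
apply: (closure_stable (f := scomb Phi l)) => [x y|x y Kx Ky|x y Kx Ky].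
- by move=> Sx Sy; exact: sco_scomb.
- have -> : scomb Phi l x = fun z => rho Phi ((1 - l) *: z + l *: x).
    by apply/funext => z; rewrite /scomb addrC.
  apply: (rho_affine_continuous_at gPhi); rewrite addrC; apply: halfspace_neq0.
  by apply: halfspace_comb => //; exact: closure_sco_halfspace.
- apply: (rho_affine_continuous_at gPhi); apply: halfspace_neq0.
  by apply: halfspace_comb => //; exact: closure_sco_halfspace.
Qed.

End HalfSpace.

Theorem mainTheorem8 (R : realType) (n : nat) (Phi : 'rV[R]_n -> R)
    (S : set 'rV[R]_n) (u : 'rV[R]_n) (alpha : R) :
  (2 <= n)%N ->
  gauge_like Phi -> convex_fun Phi ->
  enorm u = 1 -> 0 < alpha ->
  S !=set0 ->
  S `<=` sphere Phi `&` [set x | alpha <= dotv x u] ->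
  hull_addible Phi S /\
  closure (sco Phi S) =
    \bigcap_(C in [set C : set 'rV[R]_n |
                    closed C /\ s_convex Phi C /\ S `<=` C]) C /\
  (* consequently: the smallest closed s-convex subset of the sphere containing S *)
  [/\ closed (closure (sco Phi S)), s_convex Phi (closure (sco Phi S)),
      S `<=` closure (sco Phi S) &
      forall C : set 'rV[R]_n, closed C -> s_convex Phi C -> S `<=` C ->
        closure (sco Phi S) `<=` C].
Proof.
move=> _ gPhi cPhi _ alpha_gt0 S0 S_sub.
have K_sconvex := closure_sco_sconvex gPhi cPhi alpha_gt0 S_sub S0.
have S_K : S `<=` closure (sco Phi S).
  by move=> x /(sub_sco gPhi S_sub) /subset_closure.
have K_min := @closure_sco_minimal _ _ _ gPhi S.
split; first exact: halfspace_hull_addible alpha_gt0 S_sub S0.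
split; last by split => //; exact: closed_closure.
apply/seteqP; split => [x Kx C [Ccl [Cconv SC]]|x]; first exact: K_min Kx.
by apply; split; [exact: closed_closure | split].
Qed.
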